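(* Assume the setting in the context (in particular Assumption (A)). Let $\rho>0$, let $v_0\in V_f(\rho)$ and let $n$ be an integer with $n>\bar n_\rho$. Consider the fixed-rate restart recursion $v_{j+1}=\mathcal{A}(v_j,n)$, $j\geq 0$. Let $\epsilon>0$. Then: (i) the inequality $f(v_{M-1})-f(v_M)\leq \epsilon$ holds for every integer $M\geq \bar M$, where $$\bar M := 1+\frac{1}{2(\ln n-\ln \bar n_\rho)}\ln\left(1+\frac{f(v_0)-f^*}{\epsilon}\right);$$ (ii) if $n=\lceil e\,\bar n_\rho\rceil$, then the total number of iterations of $\mathcal{A}$ required to attain $f(v_{j-1})-f(v_j)\leq\epsilon$ (i.e. $n$ times the smallest $j\geq 1$ for which this holds) is upper bounded by $$\bar N_F^* := \lceil e\,\bar n_\rho\rceil\left\lceil 1+\frac12\ln\left(1+\frac{f(v_0)-f^*}{\epsilon}\right)\right\rceil.$$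
   Context: Let $f:\mathbb{R}^n\to(-\infty,\infty]$ be a proper closed convex function such that the problem $f^*=\min_{x\in\mathbb{R}^n}f(x)$ is solvable. Let $\Omega_f=\{x: f(x)=f^*\}$ be the optimal set, fix a norm $\|\cdot\|$ on $\mathbb{R}^n$ with dual norm $\|y\|_*=\sup\{y^Tz:\|z\|\leq 1\}$, and for $x\in\mathbb{R}^n$ let $\bar x=\arg\min_{z\in\Omega_f}\|x-z\|$. For $\rho\geq0$ let $V_f(\rho)=\{x\in\mathbb{R}^n: f(x)-f^*\leq\rho\}$. Let $\mathcal{A}$ be an iterative algorithm: for an initial point $x_0\in\mathrm{dom} f$ and integer $k\geq1$, $\mathcal{A}(x_0,k)\in\mathbb{R}^n$ denotes its $k$-th iterate started from $x_0$. Assumption (A): (i) for every $\rho>0$ there is $\mu_\rho>0$ with $f(x_0)-f^*\geq\frac{\mu_\rho}{2}\|x_0-\bar x_0\|^2$ for all $x_0\in V_f(\rho)$; (ii) there exist constants $a_f>0$, $L_f>0$ and a map $g:\mathbb{R}^n\to\mathbb{R}^n$ with $g(x)=0\iff x\in\Omega_f$ such that for every $x_0\in\mathrm{dom} f$: $f(\mathcal{A}(x_0,1))\leq f(x_0)-\frac{1}{2L_f}\|g(x_0)\|_*^2$ and $f(\mathcal{A}(x_0,k))-f^*\leq\frac{a_f}{(k+1)^2}\|x_0-\bar x_0\|^2$ for all $k\geq1$; (iii) $\bar n_\rho:=\max\{\frac12,\sqrt{2a_f/\mu_\rho}\}$. Here $e$ is Euler's number and $\lceil\cdot\rceil$ the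 ceiling. *)

From HB Require Import structures.
From mathcomp Require Import all_boot all_order all_algebra.
From mathcomp Require Import all_classical all_reals all_analysis.
Set Implicit Arguments. Unset Strict Implicit. Unset Printing Implicit Defensive.
Import Order.TTheory GRing.Theory Num.Theory.
Import numFieldTopology.Exports numFieldNormedType.Exports.
Local Open Scope classical_set_scope.
Local Open Scope ring_scope.

Section Defs.
Variables (R : realType) (d : nat).
Notation vec := 'rV[R]_d.

Definition dotv (y z : vec) : R := \sum_(i < d) y ord0 i * z ord0 i.

Definition is_norm (nrm : vec -> R) : Prop :=
  [/\ forall x, nrm x = 0 -> x = 0,
      forall (a : R) x, nrm (a *: x) = `|a| * nrm x &
      forall x y, nrm (x + y) <= nrm x + nrm y].

Definition dualnorm (nrm : vec -> R) (y : vec) : R :=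
  sup [set dotv y z | z in [set z | nrm z <= 1]].

Definition proper_fun (f : vec -> \bar R) : Prop :=
  (forall x, (-oo < f x)%E) /\ exists x, (f x < +oo)%E.

Definition closed_fun (f : vec -> \bar R) : Prop :=
  closed [set p : vec * R | (f p.1 <= p.2%:E)%E].

Definition convex_fun (f : vec -> \bar R) : Prop :=
  forall (x y : vec) (t : R), 0 < t < 1 ->
    (f (t *: x + (1 - t) *: y)%R <= t%:E * f x + (1 - t)%:E * f y)%E.

Definition is_min_value (f : vec -> \bar R) (fstar : R) : Prop :=
  (exists x, f x = fstar%:E) /\ forall y, (fstar%:E <= f y)%E.

Definition is_nearest_sel (f : vec -> \bar R) (fstar : R) (nrm : vec -> R)
  (bar : vec -> vec) : Prop :=
  forall x, f (bar x) = fstar%:E /\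
    forall z, f z = fstar%:E -> nrm (x - bar x) <= nrm (x - z).

Definition assumptionA (f : vec -> \bar R) (fstar : R) (nrm : vec -> R)
  (bar : vec -> vec) (Alg : vec -> nat -> vec) (mu : R -> R)
  (af Lf : R) (g : vec -> vec) : Prop :=
  [/\ forall rho, 0 < rho -> 0 < mu rho /\
        forall x0, (f x0 - fstar%:E <= rho%:E)%E ->
          ((mu rho / 2 * nrm (x0 - bar x0) ^+ 2)%:E <= f x0 - fstar%:E)%E,
      0 < af, 0 < Lf,
      forall x, g x = 0 <-> f x = fstar%:E &
      forall x0, (f x0 < +oo)%E ->
        (f (Alg x0 1%N) <= f x0 - (dualnorm nrm (g x0) ^+ 2 / (2 * Lf))%:E)%E /\
        forall k : nat, (1 <= k)%N ->
          (f (Alg x0 k) - fstar%:E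
             <= (af / (k%:R + 1) ^+ 2 * nrm (x0 - bar x0) ^+ 2)%:E)%E].

Definition nbar (af : R) (mu : R -> R) (rho : R) : R :=
  Num.max (1 / 2) (Num.sqrt (2 * af / mu rho)).

Definition restart (Alg : vec -> nat -> vec) (n : nat) (v0 : vec) (j : nat) : vec :=
  iter j (fun x => Alg x n) v0.

End Defs.

From HB Require Import structures.
From mathcomp Require Import all_boot all_order all_algebra.
From mathcomp Require Import all_classical all_reals all_analysis.
From mathcomp Require Import ring lra.

Set Implicit Arguments.
Unset Strict Implicit.
Unset Printing Implicit Defensive.

Import Order.TTheory GRing.Theory Num.Theory.
Import numFieldTopology.Exports numFieldNormedType.Exports.
Local Open Scope ring_scope.

(* Quadratic growth on the sublevel set V_f(rho) bounds ||x - xbar||^2 by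
   2 (f x - f^* ) / mu_rho, so the O(1/k^2) guarantee of n steps of the method
   contracts the optimality gap by q = (nbar_rho / n)^2 < 1 and keeps the
   restarted sequence in V_f(rho).  Hence f(v_(M-1)) - f(v_M) is at most
   q^(M-1) (f(v_0) - f^* ), which drops below eps once
   M - 1 >= ln (1 + (f(v_0) - f^* ) / eps) / (2 ln (n / nbar_rho)).
   For n = ceil(e nbar_rho) that denominator is at least 2, and the first
   index reaching the tolerance is at most the ceiling of this threshold. *)

Section RealFacts.
Variable R : realType.
Implicit Types a b x e : R.

Lemma nbar_gt0 (af : R) (mu : R -> R) (rho : R) : 0 < nbar af mu rho.
Proof. by rewrite /nbar lt_max; apply/orP; left; lra. Qed.

Lemma sqr_nbar_ge (af : R) (mu : R -> R) (rho : R) :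
  0 <= 2 * af / mu rho -> 2 * af / mu rho <= nbar af mu rho ^+ 2.
Proof.
move=> a0; rewrite -(sqr_sqrtr a0) lerXn2r ?nnegrE ?sqrtr_ge0 //.
  exact: ltW (nbar_gt0 _ _ _).
by rewrite /nbar le_max lexx orbT.
Qed.

Lemma accelerated_rate_contraction (af m nb N r : R) (n : nat) :
  0 < m -> 0 <= af -> 2 * af / m <= nb ^+ 2 -> (0 < n)%N ->
  m / 2 * N ^+ 2 <= r ->
  af / (n%:R + 1) ^+ 2 * N ^+ 2 <= (nb / n%:R) ^+ 2 * r.
Proof.
move=> m0 af0 nb2 n0 growth.
have n0R : 0 < n%:R :> R by rewrite ltr0n.
have -> : af / (n%:R + 1) ^+ 2 * N ^+ 2
          = 2 * af / m * (m / 2 * N ^+ 2) / (n%:R + 1) ^+ 2.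
  by field; apply/andP; split; apply/eqP; lra.
have -> : (nb / n%:R) ^+ 2 * r = nb ^+ 2 * r / n%:R ^+ 2.
  by field; apply/eqP; lra.
have a0 : 0 <= 2 * af / m by apply: divr_ge0; lra.
have t0 : 0 <= m / 2 * N ^+ 2 by apply: mulr_ge0; [lra | exact: sqr_ge0].
apply: le_trans (_ : nb ^+ 2 * r / (n%:R + 1) ^+ 2 <= _).
  by apply: ler_wpM2r; [rewrite invr_ge0; nra | apply: ler_pM].
apply: ler_wpM2l; first by apply: mulr_ge0; [exact: sqr_ge0 | nra].
by rewrite lef_pV2 ?posrE; nra.
Qed.

Lemma geometric_le_of_log_bound a b x e (k : nat) :
  0 < a < b -> 0 <= x -> 0 < e ->
  (2 * (ln b - ln a))^-1 * ln (1 + x / e) <= k%:R ->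
  ((a / b) ^+ 2) ^+ k * x <= e.
Proof.
case/andP=> a0 ab x0 e0 hk.
have b0 : 0 < b by apply: lt_trans ab.
set D := ln b - ln a.
have D0 : 0 < D by rewrite subr_gt0 ltr_ln ?posrE.
have qkE : ((a / b) ^+ 2) ^+ k = (expR (k%:R * (2 * D)))^-1.
  rewrite expRM_natl expRM_natl expRB !lnK ?posrE // -!exprVn.
  by rewrite invf_div.
have L1 : 1 + x / e \is Num.pos by rewrite posrE; have := divr_ge0 x0 (ltW e0); lra.
have xle : x <= e * expR (k%:R * (2 * D)).
  apply: le_trans (_ : e * expR (ln (1 + x / e)) <= _).
    by rewrite lnK // mulrDr mulr1 mulrCA divff ?mulr1 ?gt_eqF //; lra.
  rewrite ler_pM2l // ler_expR.
  by rewrite -ler_pdivrMr ?mulr_gt0 // mulrC.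
rewrite qkE mulrC ler_pdivrMr ?expR_gt0 //.
Qed.

Lemma lnB_ceil_expR_ge1 x :
  0 < x -> 1 <= ln ((Num.ceil (expR 1 * x))%:~R : R) - ln x.
Proof.
move=> x0; have ex0 : 0 < expR 1 * x by rewrite mulr_gt0 ?expR_gt0.
have := ceil_ge (expR 1 * x); set c := _%:~R => hc.
have c0 : 0 < c by apply: lt_le_trans hc.
have : ln (expR 1 * x) <= ln c by rewrite ler_ln ?posrE.
by rewrite lnM ?posrE ?expR_gt0 // expRK; lra.
Qed.

Lemma minimal_index_le_ceil (P : nat -> Prop) (T : R) (j : nat) :
  1 <= T -> (forall M : nat, T <= M%:R -> P M) ->
  (forall i : nat, (1 <= i)%N -> (i < j)%N -> ~ P i) ->
  j%:R <= (Num.ceil T)%:~R :> R.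
Proof.
move=> T1 hP hmin.
have c0 : (0 <= Num.ceil T)%R by rewrite ceil_ge0; lra.
move: (ceil_ge T) c0; case: (Num.ceil T) => // m Tm _.
rewrite ler_nat leqNgt; apply/negP => mj.
have m1 : (1 <= m)%N by rewrite -(ler_nat R); lra.
exact: hmin m m1 mj (hP m Tm).
Qed.

End RealFacts.

Section FixedRateRestart.
Variables (R : realType) (d : nat) (f : 'rV[R]_d -> \bar R) (fstar : R).
Variables (nrm : 'rV[R]_d -> R) (bar : 'rV[R]_d -> 'rV[R]_d).
Variables (Alg : 'rV[R]_d -> nat -> 'rV[R]_d) (mu : R -> R) (af Lf : R).
Variable g : 'rV[R]_d -> 'rV[R]_d.
Hypothesis fstar_le : forall x, (fstar%:E <= f x)%E.
Hypothesis hA : assumptionA f fstar nrm bar Alg mu af Lf g.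

Lemma fin_num_sublevel x r : (f x - fstar%:E <= r%:E)%E -> f x \is a fin_num.
Proof. by have := fstar_le x; case: (f x). Qed.

Lemma sublevel_bound_ge0 x r : (f x - fstar%:E <= r%:E)%E -> 0 <= r.
Proof.
by move=> hx; rewrite -lee_fin (le_trans _ hx) // sube_ge0 ?fstar_le.
Qed.

Variables (rho : R) (n : nat).
Hypotheses (rho_gt0 : 0 < rho) (nbar_lt_n : nbar af mu rho < n%:R).

Let q := (nbar af mu rho / n%:R) ^+ 2.

Lemma restart_rate_ge0 : 0 <= q.
Proof. exact: sqr_ge0. Qed.

Let n_gt0 : 0 < n%:R :> R.
Proof. exact: lt_trans (nbar_gt0 _ _ _) nbar_lt_n. Qed.

Lemma restart_rate_le1 : q <= 1.
Proof.
rewrite expr_le1 ?divr_ge0 ?(ltW n_gt0) ?(ltW (nbar_gt0 _ _ _)) //.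
by rewrite ler_pdivrMr // mul1r ltW.
Qed.

Lemma restart_step x r :
  (f x - fstar%:E <= r%:E)%E -> r <= rho ->
  (f (Alg x n) - fstar%:E <= (q * r)%:E)%E.
Proof.
move=> hxr r_rho; case: hA => hmu af0 _ _ hAlg.
have [mu0 growth] := hmu rho rho_gt0.
have fx_fin : (f x < +oo)%E by rewrite ltey_eq (fin_num_sublevel hxr).
have n0 : (0 < n)%N by rewrite -(ltr_nat R).
have [_ /(_ n n0) hAn] := hAlg x fx_fin.
have nb2 : 2 * af / mu rho <= nbar af mu rho ^+ 2.
  by apply: sqr_nbar_ge; rewrite divr_ge0 ?mulr_ge0 ?(ltW mu0) ?(ltW af0).
apply: (le_trans hAn); rewrite lee_fin /q.
apply: (accelerated_rate_contraction mu0 (ltW af0) nb2 n0).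
have hx_rho : (f x - fstar%:E <= rho%:E)%E by apply: (le_trans hxr); rewrite lee_fin.
by rewrite -lee_fin (le_trans (growth x hx_rho)).
Qed.

Lemma restart_linear_rate v0 r :
  (f v0 - fstar%:E <= r%:E)%E -> r <= rho ->
  forall j, (f (restart Alg n v0 j) - fstar%:E <= (q ^+ j * r)%:E)%E.
Proof.
move=> hv0 r_rho; have r0 := sublevel_bound_ge0 hv0.
elim=> [|j IHj]; first by rewrite expr0 mul1r.
rewrite exprS -mulrA; apply: (restart_step IHj).
apply: (le_trans _ r_rho); rewrite -[leRHS]mul1r ler_wpM2r //.
exact/exprn_ile1/restart_rate_le1/restart_rate_ge0.
Qed.

Lemma restart_successive_gap_le v0 r eps (M : nat) :
  (f v0 - fstar%:E <= r%:E)%E -> r <= rho -> 0 < eps ->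
  1 + (2 * (ln n%:R - ln (nbar af mu rho)))^-1 * ln (1 + r / eps) <= M%:R ->
  (f (restart Alg n v0 M.-1) - f (restart Alg n v0 M) <= eps%:E)%E.
Proof.
move=> hv0 r_rho eps0; case: M => [|k] hM /=.
  by rewrite subee ?lee_fin ?ltW // (fin_num_sublevel hv0).
apply: le_trans (leeB (lexx _) (fstar_le _)) _.
apply: le_trans (restart_linear_rate hv0 r_rho k) _; rewrite lee_fin.
apply: geometric_le_of_log_bound; rewrite ?nbar_gt0 ?(sublevel_bound_ge0 hv0) //.
by move: hM; rewrite -[k.+1%:R]natr1 (addrC 1) lerD2r.
Qed.

End FixedRateRestart.

Theorem mainTheorem1 (R : realType) (d : nat) (f : 'rV[R]_d -> \bar R) (fstar : R)
  (nrm : 'rV[R]_d -> R) (bar : 'rV[R]_d -> 'rV[R]_d)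
  (Alg : 'rV[R]_d -> nat -> 'rV[R]_d) (mu : R -> R) (af Lf : R)
  (g : 'rV[R]_d -> 'rV[R]_d) :
  proper_fun f -> closed_fun f -> convex_fun f ->
  is_min_value f fstar ->
  is_norm nrm ->
  is_nearest_sel f fstar nrm bar ->
  assumptionA f fstar nrm bar Alg mu af Lf g ->
  forall (rho : R) (v0 : 'rV[R]_d) (n : nat) (eps : R),
  0 < rho -> (f v0 - fstar%:E <= rho%:E)%E ->
  nbar af mu rho < n%:R ->
  0 < eps ->
  let v := restart Alg n v0 in
  let gap0 := fine (f v0 - fstar%:E) in
  (* (i) *)
  (forall M : nat,
      1 + (2 * (ln n%:R - ln (nbar af mu rho)))^-1 * ln (1 + gap0 / eps) <= M%:R ->
      (f (v M.-1) - f (v M) <= eps%:E)%E)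
  /\
  (* (ii) *)
  (n%:R = ((Num.ceil (expR 1 * nbar af mu rho))%:~R : R) ->
   forall j : nat, (1 <= j)%N ->
     (f (v j.-1) - f (v j) <= eps%:E)%E ->
     (forall i : nat, (1 <= i)%N -> (i < j)%N -> ~ (f (v i.-1) - f (v i) <= eps%:E)%E) ->
     (n * j)%N%:R <= ((Num.ceil (expR 1 * nbar af mu rho))%:~R : R)
                   * ((Num.ceil (1 + (2:R)^-1 * ln (1 + gap0 / eps)))%:~R : R)).
Proof.
move=> _ _ _ [_ fstar_le] _ _ hA rho v0 n eps rho0 hv0 hn eps0 v gap0.
have gap0E : (f v0 - fstar%:E = gap0%:E)%E.
  by rewrite fineK // fin_numB (fin_num_sublevel fstar_le hv0).
have hgap : (f v0 - fstar%:E <= gap0%:E)%E by rewrite gap0E.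
have gap0_rho : gap0 <= rho by rewrite -lee_fin -gap0E.
have partI := restart_successive_gap_le fstar_le hA rho0 hn hgap gap0_rho eps0.
split=> [|hnc j _ _ hmin]; first exact: partI.
set L := ln (1 + gap0 / eps).
have L0 : 0 <= L.
  by rewrite ln_ge0 // lerDl divr_ge0 ?(sublevel_bound_ge0 fstar_le hgap) ?ltW.
have rate_ge1 := lnB_ceil_expR_ge1 (nbar_gt0 af mu rho); rewrite -hnc in rate_ge1.
rewrite natrM -hnc ler_wpM2l //.
apply: (minimal_index_le_ceil (P := fun M => f (v M.-1) - f (v M) <= eps%:E)%E) => //.
  by rewrite lerDl mulr_ge0 // invr_ge0.
move=> M hM; apply: partI; apply: le_trans hM; rewrite lerD2l ler_wpM2r //.
by rewrite lef_pV2 ?posrE; lra.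
Qed.
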